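(* Let $(F_S,\iota)$ be an embedded local étale algebra, $\Gamma\subseteq\mathrm{PGL}_2(F_S)$ a plectic subgroup and $g\in\mathrm{PGL}_2(F_S)$. Then $g\Gamma g^{-1}$ is plectic with set of distinguished limit points $\mathcal L_{g\Gamma g^{-1},S}=g(\mathcal L_{\Gamma,S})$.
   Context: Fix a prime $p$ and let $\mathbf{C}$ be the completion of an algebraic closure of $\mathbb{Q}_p$ or of $\mathbb{F}_p((T))$. An embedded local étale algebra $(F_S,\iota)$ consists of a finite non-empty set $S$, non-Archimedean local fields $F_\mathfrak p$ ($\mathfrak p\in S$) of residue characteristic $p$ and the same characteristic as $\mathbf C$, and embeddings $\iota_\mathfrak p\colon F_\mathfrak p\hookrightarrow\mathbf C$ (so $\mathbb P^1(F_\mathfrak p)\subseteq\mathbb P^1(\mathbf C)$). $\mathrm{PGL}_2(F_S)=\prod_\mathfrak p\mathrm{PGL}_2(F_\mathfrak p)$ acts componentwise by Möbius transformations on $\prod_{\mathfrak p\in S}\mathbb P^1(\mathbf C)$. The limit set $\mathcal L^S_\Gamma$ of a subgroup $\Gamma$ is the set of $x$ with $\gamma_j(y)\to x$ for some $y$ and pairwise distinct $\gamma_j\in\Gamma$. $\Gamma$ is plectic if there are subsets $\mathcal L_{\Gamma,\mathfrak p}\subseteq\mathbb P^1(F_\mathfrak p)$ with $\mathcal L^S_\Gamma=\bigcup_\mathfrak p\big(\mathcal L_{\Gamma,\mathfrak p}\times\prod_{\mathfrak q\ne\mathfrak p}\mathbb P^1(\mathbf C)\big)$; its set of distinguished limit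 points is $\mathcal L_{\Gamma,S}=\prod_\mathfrak p\mathcal L_{\Gamma,\mathfrak p}$. *)

From HB Require Import structures.
From mathcomp Require Import all_boot all_order all_algebra.
From mathcomp Require Import reals.
Set Implicit Arguments. Unset Strict Implicit. Unset Printing Implicit Defensive.
Import Order.TTheory GRing.Theory Num.Theory.
Local Open Scope ring_scope.

Section Defs.
Variables (R : realType) (C : fieldType) (abs : C -> R).

Definition is_na_abs : Prop :=
  (forall x, 0 <= abs x) /\ (forall x, abs x = 0 <-> x = 0) /\
  (forall x y, abs (x * y) = abs x * abs y) /\
  (forall x y, abs (x + y) <= Num.max (abs x) (abs y)).

Definition cvgC (u : nat -> C) (x : C) : Prop :=
  forall e : R, 0 < e -> exists N, forall n, (N <= n)%N -> abs (u n - x) < e.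
Definition cauchyC (u : nat -> C) : Prop :=
  forall e : R, 0 < e -> exists N, forall m n, (N <= m)%N -> (N <= n)%N ->
    abs (u m - u n) < e.
Definition completeC : Prop := forall u, cauchyC u -> exists x, cvgC u x.
Definition closedC (A : C -> Prop) : Prop :=
  forall u x, (forall n, A (u n)) -> cvgC u x -> A x.
Definition closureC (A : C -> Prop) : C -> Prop :=
  fun x => exists u, (forall n, A (u n)) /\ cvgC u x.
Definition denseC (A : C -> Prop) : Prop :=
  forall x (e : R), 0 < e -> exists y, A y /\ abs (x - y) < e.

Definition is_subfield (A : C -> Prop) : Prop :=
  A 0 /\ A 1 /\ (forall x y, A x -> A y -> A (x + y)) /\ (forall x, A x -> A (- x)) /\
  (forall x y, A x -> A y -> A (x * y)) /\ (forall x, A x -> x != 0 -> A x^-1).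

Definition prime_subfield : C -> Prop :=
  fun x => exists a b : int, b%:~R != 0 :> C /\ x = a%:~R / b%:~R.
Definition ratfun_field (t : C) : C -> Prop :=
  fun x => exists P Q : {poly C},
    (forall i, prime_subfield P`_i) /\ (forall i, prime_subfield Q`_i) /\
    Q.[t] != 0 /\ x = P.[t] / Q.[t].
Definition algebraic_over (L : C -> Prop) : C -> Prop :=
  fun x => exists P : {poly C}, P != 0 /\ (forall i, L P`_i) /\ root P x.

(** C is (isomorphic, as a valued field, to) the completion of an algebraic
    closure of Q_p (= closure of Q in C, with v(p) < 1) or of F_p((T))
    (= closure of F_p(t) in C, for some 0 < |t| < 1). *)
Definition is_completed_alg_closure (p : nat) : Prop :=
  prime p /\ is_na_abs /\ completeC /\
  ( ((forall n, (0 < n)%N -> n%:R != 0 :> C) /\ abs p%:R < 1 /\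
       denseC (algebraic_over (closureC prime_subfield)))
  \/ (p \in [pchar C] /\ exists t, 0 < abs t < 1 /\
       denseC (algebraic_over (closureC (ratfun_field t))))).

(** (the image in C of) a non-Archimedean local field: a closed (= complete)
    subfield with discrete nontrivial value group and finite residue field *)
Definition is_local_subfield (F : C -> Prop) : Prop :=
  is_subfield F /\ closedC F /\
  (exists r : R, 0 < r < 1 /\ (exists pi, F pi /\ abs pi = r) /\
     forall x, F x -> x != 0 -> exists k : int, abs x = r ^ k) /\
  (exists s : seq C, (forall y, y \in s -> F y /\ abs y <= 1) /\
     forall x, F x -> abs x <= 1 -> exists2 y, y \in s & abs (x - y) < 1).

Inductive P1 := Fin of C | Inf.

Definition inP1 (F : C -> Prop) (z : P1) : Prop :=
  match z with Fin a => F a | Inf => True end.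

Definition cvgP1 (u : nat -> P1) (x : P1) : Prop :=
  match x with
  | Fin a => forall e : R, 0 < e -> exists N, forall n, (N <= n)%N ->
               exists b, u n = Fin b /\ abs (b - a) < e
  | Inf => forall M : R, exists N, forall n, (N <= n)%N ->
               u n = Inf \/ exists b, u n = Fin b /\ M < abs b
  end.

Definition mobius (A : 'M[C]_2) (z : P1) : P1 :=
  let a := A ord0 ord0 in let b := A ord0 ord_max in
  let c := A ord_max ord0 in let d := A ord_max ord_max in
  match z with
  | Fin x => if c * x + d == 0 then Inf else Fin ((a * x + b) / (c * x + d))
  | Inf => if c == 0 then Inf else Fin (a / c)
  end.

Variables (S : finType) (F : S -> C -> Prop).

(** elements of PGL_2(F_S): families of invertible matrices with entries in F_s,
    taken modulo F_s^* scalars (pgl_eq) *)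
Definition inPGL (g : S -> 'M[C]_2) : Prop :=
  forall s, (forall i j, F s (g s i j)) /\ \det (g s) != 0.
Definition pgl_eq (g h : S -> 'M[C]_2) : Prop :=
  forall s, exists c, F s c /\ c != 0 /\ h s = c *: g s.

(** subgroups of PGL_2(F_S), represented by their (scalar-saturated) sets of
    matrix representatives *)
Definition is_subgroup (G : (S -> 'M[C]_2) -> Prop) : Prop :=
  (forall g, G g -> inPGL g) /\
  G (fun _ => 1%:M) /\
  (forall g h, G g -> G h -> G (fun s => g s *m h s)) /\
  (forall g, G g -> G (fun s => invmx (g s))) /\
  (forall g h, G g -> pgl_eq g h -> G h).

Definition conjG (g : S -> 'M[C]_2) (G : (S -> 'M[C]_2) -> Prop) :=
  fun h => exists k, G k /\ h = (fun s => g s *m k s *m invmx (g s)).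

Definition actS (g : S -> 'M[C]_2) (x : S -> P1) : S -> P1 :=
  fun s => mobius (g s) (x s).

Definition limit_set (G : (S -> 'M[C]_2) -> Prop) (x : S -> P1) : Prop :=
  exists (y : S -> P1) (gam : nat -> S -> 'M[C]_2),
    (forall j, G (gam j)) /\
    (forall i j, i <> j -> ~ pgl_eq (gam i) (gam j)) /\
    (forall s, cvgP1 (fun j => actS (gam j) y s) (x s)).

Definition plectic_witness (G : (S -> 'M[C]_2) -> Prop) (L : S -> P1 -> Prop) :=
  (forall s z, L s z -> inP1 (F s) z) /\
  (forall x, limit_set G x <-> exists s, L s (x s)).

Definition plectic (G : (S -> 'M[C]_2) -> Prop) : Prop :=
  is_subgroup G /\ exists L, plectic_witness G L.

Definition dist_points (L : S -> P1 -> Prop) : (S -> P1) -> Prop :=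
  fun x => forall s, L s (x s).

End Defs.

(* Conjugation by g maps Gamma bijectively onto g Gamma g^-1, preserving
   distinctness in PGL_2, and each g_p acts on P^1(C) by a homeomorphism: a
   composite of translations, scalings and z |-> 1/z, all continuous for a
   non-Archimedean absolute value.  Hence the limit set of g Gamma g^-1 is the
   image under g of that of Gamma, and the family g_p(L_p) exhibits g Gamma g^-1
   as plectic.  Conversely, the sets L_p of any plectic decomposition are
   determined by the limit set: each F_p is a proper subfield of C (it misses
   the square roots of its uniformizers), so z lies in L_p iff the limit set
   contains the point with coordinate z at p and coordinates outside P^1(F_q)
   at every q <> p. *)

From mathcomp Require Import all_boot all_order all_algebra.
From mathcomp Require Import reals.
From mathcomp Require Import ring lra zify.
From Stdlib Require Import FunctionalExtensionality IndefiniteDescription.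
Set Implicit Arguments. Unset Strict Implicit. Unset Printing Implicit Defensive.
Import Order.TTheory GRing.Theory Num.Theory.
Local Open Scope ring_scope.

Section NonArchimedean.
Variables (R : realType) (C : fieldType) (abs : C -> R).
Hypothesis abs_na : is_na_abs abs.

Lemma abs_ge0 x : 0 <= abs x. Proof. by case: abs_na. Qed.
Lemma abs_eq0 x : abs x = 0 <-> x = 0. Proof. by case: abs_na => _ []. Qed.
Lemma absM x y : abs (x * y) = abs x * abs y. Proof. by case: abs_na => _ [_ []]. Qed.
Lemma abs_le_max x y : abs (x + y) <= Num.max (abs x) (abs y).
Proof. by case: abs_na => _ [_ [_]]. Qed.

Lemma abs0 : abs 0 = 0. Proof. exact/abs_eq0. Qed.

Lemma abs_gt0 x : x != 0 -> 0 < abs x.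
Proof. by move=> /eqP x0; rewrite lt_def abs_ge0 andbT; apply/eqP => /abs_eq0. Qed.

Lemma abs1 : abs 1 = 1.
Proof.
apply: (mulfI (lt0r_neq0 (abs_gt0 (oner_neq0 C)))).
by rewrite -absM !mulr1.
Qed.

Lemma absN x : abs (- x) = abs x.
Proof.
have absN1 : abs (-1) = 1.
  apply/eqP; rewrite -sqrp_eq1 ?abs_ge0 //.
  by rewrite expr2 -absM mulrNN mulr1 abs1.
by rewrite -mulN1r absM absN1 mul1r.
Qed.

Lemma absB x y : abs (x - y) = abs (y - x). Proof. by rewrite -absN opprB. Qed.

Lemma absV x : abs x^-1 = (abs x)^-1.
Proof.
have [->|x0] := eqVneq x 0; first by rewrite invr0 abs0 invr0.
apply: (mulfI (lt0r_neq0 (abs_gt0 x0))).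
by rewrite -absM !mulfV ?abs1 ?lt0r_neq0 ?abs_gt0.
Qed.

Lemma abs_addr_lt x y : abs y < abs x -> abs (x + y) = abs x.
Proof.
move=> yx; apply/eqP; rewrite eq_le; apply/andP; split.
  by apply: le_trans (abs_le_max x y) _; rewrite ge_max lexx ltW.
have := abs_le_max (x + y) (- y); rewrite addrK absN le_max => /orP[//|xy].
by have := lt_le_trans yx xy; rewrite ltxx.
Qed.

Definition continuousP1 (f : P1 C -> P1 C) : Prop :=
  forall u x, cvgP1 abs u x -> cvgP1 abs (fun n => f (u n)) (f x).

Lemma continuousP1_comp f g :
  continuousP1 f -> continuousP1 g -> continuousP1 (fun z => f (g z)).
Proof. by move=> cf cg u x /cg /cf. Qed.

Definition translateP1 (b : C) (z : P1 C) : P1 C :=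
  if z is Fin x then Fin (x + b) else Inf C.
Definition scaleP1 (k : C) (z : P1 C) : P1 C :=
  if z is Fin x then Fin (k * x) else Inf C.
Definition invP1 (z : P1 C) : P1 C :=
  if z is Fin x then (if x == 0 then Inf C else Fin x^-1) else Fin 0.

Lemma continuous_translateP1 b : continuousP1 (translateP1 b).
Proof.
move=> u [a|] ua /=.
  move=> e e0; have [N uN] := ua e e0; exists N => n /uN [x [-> xa]].
  by exists (x + b); rewrite opprD addrACA subrr addr0.
move=> M; have [N uN] := ua (Num.max M (abs b)); exists N => n /uN [->|]; first by left.
move=> [x [-> Mbx]]; right; exists (x + b).
by move: Mbx; rewrite gt_max => /andP[Mx bx]; rewrite abs_addr_lt.
Qed.

Lemma continuous_scaleP1 k : k != 0 -> continuousP1 (scaleP1 k).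
Proof.
move=> /abs_gt0 k0 u [a|] ua /=.
  move=> e e0; have [N uN] := ua (e / abs k) (divr_gt0 e0 k0).
  exists N => n /uN [x [-> xa]]; exists (k * x); split => //.
  by rewrite -mulrBr absM mulrC -ltr_pdivlMr.
move=> M; have [N uN] := ua (M / abs k); exists N => n /uN [->|]; first by left.
move=> [x [-> Mx]]; right; exists (k * x); split => //.
by rewrite absM mulrC -ltr_pdivrMr.
Qed.

Lemma continuous_invP1 : continuousP1 invP1.
Proof.
move=> u [a|] ua /=.
- move: ua; have [-> ua M|a0 ua] := eqVneq a 0.
    have M1 : 0 < `|M| + 1 by have := normr_ge0 M; lra.
    have /ua [N uN] : 0 < (`|M| + 1)^-1 by rewrite invr_gt0.
    exists N => n /uN [x [-> xM]] /=; rewrite subr0 in xM.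
    have [_|x0] := eqVneq x 0; [by left | right; exists x^-1; split => //].
    have : `|M| + 1 < (abs x)^-1 by rewrite invf_pgt ?posrE ?abs_gt0.
    by rewrite absV; have := ler_norm M; lra.
  have a_gt0 := abs_gt0 a0.
  move=> e e0.
  have /ua [N uN] : 0 < Num.min (abs a) (e * abs a * abs a).
    by rewrite lt_min a_gt0 !mulr_gt0.
  exists N => n /uN [x [-> xae]]; move: xae; rewrite lt_min => /andP[xa xe].
  have ax : abs x = abs a by rewrite -(subrK a x) addrC abs_addr_lt.
  have x0 : x != 0 by apply: contraTneq a_gt0 => x0; rewrite -ax x0 abs0 ltxx.
  rewrite /= (negbTE x0); exists x^-1; split => //.
  have -> : x^-1 - a^-1 = (a - x) / (x * a) by field; apply/andP.
  by rewrite absM absV absM ax absB ltr_pdivrMr ?mulr_gt0 // mulrA.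
- move=> e e0; have [N uN] := ua e^-1; exists N => n /uN [->|[x [-> ex]]] /=.
    by exists 0; rewrite subrr abs0.
  have x_gt0 : 0 < abs x by apply: lt_trans ex; rewrite invr_gt0.
  have x0 : x != 0 by apply: contraTneq x_gt0 => ->; rewrite abs0 ltxx.
  rewrite (negbTE x0); exists x^-1; split => //.
  by rewrite subr0 absV -[e]invrK ltf_pV2 ?posrE ?invr_gt0.
Qed.

End NonArchimedean.

Section Mobius.
Variable C : fieldType.
Implicit Types (A B : 'M[C]_2) (z : P1 C).

Local Notation a A := (A ord0 ord0).
Local Notation b A := (A ord0 ord_max).
Local Notation c A := (A ord_max ord0).
Local Notation d A := (A ord_max ord_max).

Let lift01 : lift ord0 ord0 = ord_max :> 'I_2. Proof. exact/val_inj. Qed.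
Let lift10 : lift ord_max ord0 = ord0 :> 'I_2. Proof. exact/val_inj. Qed.

Lemma mulmx2E A B i j : (A *m B) i j = A i ord0 * B ord0 j + A i ord_max * B ord_max j.
Proof. by rewrite mxE big_ord_recl big_ord1 lift01. Qed.

Lemma det2E A : \det A = a A * d A - b A * c A.
Proof.
rewrite (expand_det_row _ ord0) big_ord_recl big_ord1 /cofactor !det_mx11 !mxE /=.
by rewrite lift01 lift10 expr0 expr1 mul1r mulN1r; ring.
Qed.

Definition homP1 (u v : C) : P1 C := if v == 0 then Inf C else Fin (u / v).
Definition numP1 z : C := if z is Fin x then x else 1.
Definition denP1 z : C := if z is Fin _ then 1 else 0.

Lemma mobiusE A z :
  mobius A z = homP1 (a A * numP1 z + b A * denP1 z) (c A * numP1 z + d A * denP1 z).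
Proof. by case: z => [x|] /=; rewrite /homP1 !mulr1 ?mulr0 ?addr0. Qed.

Lemma mobius_homP1 A u v : (u != 0) || (v != 0) ->
  mobius A (homP1 u v) = homP1 (a A * u + b A * v) (c A * u + d A * v).
Proof.
rewrite /homP1; have [-> |v0 _] := eqVneq v 0.
  rewrite /= orbF => u0; rewrite !mulr0 !addr0 mulf_eq0 (negbTE u0) orbF.
  by case: eqP => // /eqP c0; congr Fin; field; apply/andP.
rewrite /=; have -> : c A * (u / v) + d A = (c A * u + d A * v) / v by field.
rewrite /= mulf_eq0 invr_eq0 (negbTE v0) orbF.
by case: eqP => // /eqP e0; congr Fin; field; apply/andP.
Qed.

Lemma homP1_coords_neq0 B z : \det B != 0 ->
  (a B * numP1 z + b B * denP1 z != 0) || (c B * numP1 z + d B * denP1 z != 0).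
Proof.
rewrite det2E -negb_and => dB; apply/andP => -[/eqP n0 /eqP d0].
have numE : (a B * d B - b B * c B) * numP1 z =
   d B * (a B * numP1 z + b B * denP1 z) - b B * (c B * numP1 z + d B * denP1 z) by ring.
have denE : (a B * d B - b B * c B) * denP1 z =
   a B * (c B * numP1 z + d B * denP1 z) - c B * (a B * numP1 z + b B * denP1 z) by ring.
rewrite n0 d0 !mulr0 subrr in numE denE.
move/eqP: numE; move/eqP: denE; rewrite !mulf_eq0 (negbTE dB) /=.
by case: {n0 d0} z => [x|] /=; rewrite oner_eq0.
Qed.

Lemma mobius_mul A B z : \det B != 0 -> mobius (A *m B) z = mobius A (mobius B z).
Proof.
move=> dB; rewrite [mobius B z]mobiusE mobius_homP1 ?homP1_coords_neq0 //.
by rewrite mobiusE !mulmx2E; congr homP1; ring.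
Qed.

Lemma mobius1 z : mobius 1%:M z = z.
Proof. by case: z => [x|] /=; rewrite !mxE /= ?eqxx ?mul0r ?add0r ?oner_eq0 ?mul1r ?addr0 ?divr1. Qed.

Lemma unitmx2 A : (A \in unitmx) = (\det A != 0).
Proof. by rewrite unitmxE unitfE. Qed.

Lemma mobiusK A : \det A != 0 -> cancel (mobius A) (mobius (invmx A)).
Proof. by move=> dA z; rewrite -mobius_mul // mulVmx ?mobius1 ?unitmx2. Qed.

Lemma mobiusKV A : \det A != 0 -> cancel (mobius (invmx A)) (mobius A).
Proof. by move=> dA z; rewrite -mobius_mul ?det_inv ?invr_eq0 // mulmxV ?mobius1 ?unitmx2. Qed.

End Mobius.

(* For A = [[a, b], [c, d]]: if c = 0, A z = (a/d) z + b/d;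
   otherwise A z = a/c + ((bc - ad)/c^2) / (z + d/c). *)
Lemma continuous_mobius (R : realType) (C : fieldType) (abs : C -> R) (A : 'M[C]_2) :
  is_na_abs abs -> \det A != 0 -> continuousP1 abs (mobius A).
Proof.
move=> abs_na; rewrite det2E.
set a := A ord0 ord0; set b := A ord0 ord_max.
set c := A ord_max ord0; set d := A ord_max ord_max.
have [c0|c0] := eqVneq c 0.
  rewrite c0 mulr0 subr0 mulf_eq0 negb_or => /andP[a0 d0].
  have -> : mobius A = fun z => translateP1 (b / d) (scaleP1 (a / d) z).
    apply: functional_extensionality => -[x|] /=; rewrite -/a -/b -/c -/d c0 ?eqxx //.
    by rewrite mul0r add0r (negbTE d0); congr Fin; field.
  apply: continuousP1_comp; first exact: continuous_translateP1.
  by apply: continuous_scaleP1; rewrite // mulf_neq0 ?invr_eq0.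
rewrite -oppr_eq0 opprB => det0.
have k0 : (b * c - a * d) / (c * c) != 0 by rewrite mulf_neq0 ?invr_eq0 ?mulf_neq0.
have -> : mobius A = fun z => translateP1 (a / c)
    (scaleP1 ((b * c - a * d) / (c * c)) (invP1 (translateP1 (d / c) z))).
  apply: functional_extensionality => -[x|] /=; rewrite -/a -/b -/c -/d; last first.
    by rewrite (negbTE c0) mulr0 add0r.
  have -> : c * x + d = c * (x + d / c) by field.
  rewrite mulf_eq0 (negbTE c0) /=; case: eqP => //= /eqP xd0; congr Fin.
  by field; rewrite c0 -(divfK c0 d) -mulrDl mulf_neq0.
apply: continuousP1_comp; first exact: continuous_translateP1.
apply: continuousP1_comp; first exact: continuous_scaleP1.
apply: continuousP1_comp; first exact: continuous_invP1.
exact: continuous_translateP1.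
Qed.

Section Subfield.
Variables (C : fieldType) (P : C -> Prop).
Hypothesis P_subfield : is_subfield P.

Lemma subfield0 : P 0. Proof. by case: P_subfield. Qed.
Lemma subfield1 : P 1. Proof. by case: P_subfield => _ []. Qed.
Lemma subfieldD x y : P x -> P y -> P (x + y).
Proof. by case: P_subfield => _ [_ [PD _]]; apply: PD. Qed.
Lemma subfieldN x : P x -> P (- x).
Proof. by case: P_subfield => _ [_ [_ [PN _]]]; apply: PN. Qed.
Lemma subfieldM x y : P x -> P y -> P (x * y).
Proof. by case: P_subfield => _ [_ [_ [_ [PM _]]]]; apply: PM. Qed.

Lemma subfieldV x : P x -> P x^-1.
Proof.
have [-> _|x0 Px] := eqVneq x 0; first by rewrite invr0; exact: subfield0.
by case: P_subfield => _ [_ [_ [_ [_ PV]]]]; apply: PV.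
Qed.

Lemma subfield_sign n : P ((-1) ^+ n).
Proof.
elim: n => [|n IHn]; first by rewrite expr0; exact: subfield1.
by rewrite exprS; apply: subfieldM => //; apply/subfieldN/subfield1.
Qed.

Definition entries_in m n (A : 'M[C]_(m, n)) : Prop := forall i j, P (A i j).

Lemma entries_in_mul m n l (A : 'M[C]_(m, n)) (B : 'M[C]_(n, l)) :
  entries_in A -> entries_in B -> entries_in (A *m B).
Proof.
move=> PA PB i j; rewrite mxE.
by apply: big_ind => [|x y|k _]; [exact: subfield0 | exact: subfieldD | exact: subfieldM].
Qed.

Lemma entries_in_det n (A : 'M[C]_n) : entries_in A -> P (\det A).
Proof.
move=> PA; apply: big_ind => [|x y|s _]; [exact: subfield0 | exact: subfieldD |].
apply: subfieldM; first exact: subfield_sign.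
by apply: big_ind => [|x y|i _]; [exact: subfield1 | exact: subfieldM | exact: PA].
Qed.

Lemma entries_in_invmx n (A : 'M[C]_n) : entries_in A -> entries_in (invmx A).
Proof.
move=> PA i j; rewrite /invmx; case: (A \in unitmx) => //.
rewrite !mxE; apply: subfieldM; first exact/subfieldV/entries_in_det.
apply: subfieldM; first exact: subfield_sign.
by apply: entries_in_det => u v; rewrite !mxE.
Qed.

Lemma mobius_inP1 (A : 'M[C]_2) z : entries_in A -> inP1 P z -> inP1 P (mobius A z).
Proof.
move=> PA; case: z => [x|] /= Px; case: eqP => //= _.
  by apply: subfieldM; [|apply: subfieldV]; apply: subfieldD => //; apply: subfieldM.
by apply: subfieldM => //; apply: subfieldV.
Qed.

End Subfield.

Lemma invmx_conj (C : fieldType) n (A B : 'M[C]_n) : A \in unitmx -> B \in unitmx ->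
  invmx (A *m B *m invmx A) = A *m invmx B *m invmx A.
Proof.
move=> uA uB; have uX : A *m B *m invmx A \in unitmx by rewrite !unitmx_mul unitmx_inv uA uB.
have XY : (A *m B *m invmx A) *m (A *m invmx B *m invmx A) = 1%:M.
  by rewrite !mulmxA mulmxKV // mulmxK // mulmxV.
by rewrite -[invmx _]mulmx1 -XY mulKmx.
Qed.

Section Conjugation.
Variables (R : realType) (C : fieldType) (abs : C -> R) (S : finType) (F : S -> C -> Prop).
Implicit Types (g k : S -> 'M[C]_2) (G : (S -> 'M[C]_2) -> Prop) (x : S -> P1 C).

Definition invS g : S -> 'M[C]_2 := fun s => invmx (g s).
Definition conjS g k : S -> 'M[C]_2 := fun s => g s *m k s *m invmx (g s).
Definition det_neq0 G : Prop := forall k, G k -> forall s, \det (k s) != 0.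

Lemma pgl_eq_conjS g k1 k2 : pgl_eq F k1 k2 -> pgl_eq F (conjS g k1) (conjS g k2).
Proof.
move=> k12 s; have [c [Fc [c0 k2E]]] := k12 s; exists c; do 2!split => //.
by rewrite /conjS k2E -scalemxAr -scalemxAl.
Qed.

Lemma limit_set_mono G G' x :
  (forall k, G k -> G' k) -> limit_set abs F G x -> limit_set abs F G' x.
Proof. by move=> GG' [y [gam [Ggam rest]]]; exists y, gam; split => // j; apply/GG'/Ggam. Qed.

Section FixedConjugator.
Variable g : S -> 'M[C]_2.
Hypothesis det_g : forall s, \det (g s) != 0.

Let unit_g s : g s \in unitmx. Proof. by rewrite unitmx2. Qed.

Lemma conjS_invK k : conjS (invS g) (conjS g k) = k.
Proof.
apply: functional_extensionality => s.
by rewrite /conjS /invS invmxK !mulmxA mulVmx // mul1mx mulmxKV.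
Qed.

Lemma conjS_invKV k : conjS g (conjS (invS g) k) = k.
Proof.
apply: functional_extensionality => s.
by rewrite /conjS /invS invmxK !mulmxA mulmxV // mul1mx mulmxK.
Qed.

Lemma det_neq0_conjG G : det_neq0 G -> det_neq0 (conjG g G).
Proof.
move=> detG _ [k [Gk ->]] s.
by rewrite !det_mulmx det_inv !mulf_neq0 ?invr_eq0 //; apply: detG.
Qed.

Lemma actS_invK x : actS (invS g) (actS g x) = x.
Proof. by apply: functional_extensionality => s; rewrite /actS mobiusK. Qed.

Lemma actS_invKV x : actS g (actS (invS g) x) = x.
Proof. by apply: functional_extensionality => s; rewrite /actS mobiusKV. Qed.

Lemma actS_conjS k x : (forall s, \det (k s) != 0) ->
  actS (conjS g k) x = actS g (actS k (actS (invS g) x)).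
Proof.
move=> det_k; apply: functional_extensionality => s.
by rewrite /actS /conjS !mobius_mul ?det_inv ?invr_eq0 ?det_mulmx ?mulf_neq0 ?invr_eq0.
Qed.

Lemma limit_set_conjG G x : is_na_abs abs -> det_neq0 G ->
  limit_set abs F G x -> limit_set abs F (conjG g G) (actS g x).
Proof.
move=> abs_na detG [y [gam [Ggam [gam_neq gam_cvg]]]].
exists (actS g y), (fun j => conjS g (gam j)); split; [|split].
- by move=> j; exists (gam j).
- move=> i j ij /(pgl_eq_conjS (invS g)); rewrite !conjS_invK; exact: gam_neq.
- move=> s; rewrite (_ : (fun j => _) = fun j => mobius (g s) (actS (gam j) y s)).
    exact: continuous_mobius.
  apply: functional_extensionality => j.
  by rewrite actS_conjS ?actS_invK //; apply: detG.
Qed.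

End FixedConjugator.

Lemma det_invS g : (forall s, \det (g s) != 0) -> forall s, \det (invS g s) != 0.
Proof. by move=> det_g s; rewrite det_inv invr_eq0. Qed.

Lemma conjG_invS_sub g G k : (forall s, \det (g s) != 0) ->
  conjG (invS g) (conjG g G) k -> G k.
Proof.
move=> det_g [_ [[k' [Gk' ->]] ->]].
by have := conjS_invK det_g k'; rewrite /conjS /invS => ->.
Qed.

Lemma limit_set_conjGE g G x : is_na_abs abs -> (forall s, \det (g s) != 0) ->
  det_neq0 G -> limit_set abs F (conjG g G) x <-> limit_set abs F G (actS (invS g) x).
Proof.
move=> abs_na det_g detG; split; last first.
  by move=> /(limit_set_conjG det_g abs_na detG); rewrite actS_invKV.
move=> /(limit_set_conjG (det_invS det_g) abs_na (det_neq0_conjG det_g detG)).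
by apply: limit_set_mono => k; apply: conjG_invS_sub.
Qed.

(* The image g_s(L_s), written as the preimage under g_s^-1. *)
Definition imageS g (L : S -> P1 C -> Prop) : S -> P1 C -> Prop :=
  fun s z => L s (mobius (invmx (g s)) z).

Section Plectic.
Hypothesis F_subfield : forall s, is_subfield (F s).
Variable g : S -> 'M[C]_2.
Hypothesis g_PGL : inPGL F g.

Let det_g s : \det (g s) != 0. Proof. by case: (g_PGL s). Qed.
Let unit_g s : g s \in unitmx. Proof. by rewrite unitmx2. Qed.

Lemma inPGL_conjS k : inPGL F k -> inPGL F (conjS g k).
Proof.
move=> k_PGL s; have [Fg _] := g_PGL s; have [Fk det_k] := k_PGL s; split.
  by do !apply: entries_in_mul => //; apply: entries_in_invmx.
by rewrite !det_mulmx det_inv !mulf_neq0 ?invr_eq0.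
Qed.

Lemma conjG_subgroup G : is_subgroup F G -> is_subgroup F (conjG g G).
Proof.
case=> G_PGL [G1 [GM [GV Gpgl]]]; split; [|split; [|split; [|split]]].
- by move=> _ [k [Gk ->]]; apply/inPGL_conjS/G_PGL.
- exists (fun=> 1%:M); split => //; apply: functional_extensionality => s.
  by rewrite mulmx1 mulmxV.
- move=> _ _ [k1 [Gk1 ->]] [k2 [Gk2 ->]]; exists (fun s => k1 s *m k2 s); split.
    exact: GM.
  by apply: functional_extensionality => s; rewrite !mulmxA mulmxKV.
- move=> _ [k [Gk ->]]; exists (invS k); split; first exact: GV.
  apply: functional_extensionality => s; rewrite invmx_conj ?unitmx2 //.
  by have [_] := G_PGL k Gk s.
- move=> _ h [k [Gk ->]] kh; exists (conjS (invS g) h); split.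
    apply: Gpgl Gk _; rewrite -(conjS_invK det_g k); exact: pgl_eq_conjS.
  exact/esym/conjS_invKV.
Qed.

Lemma plectic_witness_conjG G L : is_na_abs abs -> is_subgroup F G ->
  plectic_witness abs F G L -> plectic_witness abs F (conjG g G) (imageS g L).
Proof.
move=> abs_na [G_PGL _] [LF G_lim]; split.
  move=> s z /LF; have [Fg _] := g_PGL s.
  by move=> /(mobius_inP1 (F_subfield s) Fg); rewrite mobiusKV.
have detG : det_neq0 G by move=> k /G_PGL k_PGL s; case: (k_PGL s).
by move=> x; rewrite (limit_set_conjGE _ abs_na det_g detG); exact: G_lim.
Qed.

End Plectic.

End Conjugation.

(* A square root of a uniformizer has valuation 1/2, so lies outside the field. *)
Lemma local_subfield_proper (R : realType) (C : closedFieldType) (abs : C -> R)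
    (P : C -> Prop) :
  is_na_abs abs -> is_local_subfield abs P -> exists c, ~ P c.
Proof.
move=> abs_na [_ [_ [[r [/andP[r0 r1] [[pi [_ pi_r]] val_r]]] _]]].
have [x /rootP] : exists x, root ('X^2 - pi%:P) x by apply/closed_rootP; rewrite size_XnsubC.
rewrite !hornerE => /eqP; rewrite subr_eq0 => /eqP x2; exists x => Px.
have x0 : x != 0.
  by apply: contraTneq r0 => x0; rewrite -pi_r -x2 x0 expr0n /= (abs0 abs_na) ltxx.
have [k xk] := val_r x Px x0.
have : r ^ 1 = r ^ (k + k) by rewrite expfzDr ?gt_eqF // -xk -(absM abs_na) -expr2 x2 pi_r.
by move/(ieexprIz r0 (negbT (lt_eqF r1))); lia.
Qed.

Lemma cylinder_union_sub (I : eqType) T (W W' : I -> T -> Prop) (out : I -> T) :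
  (forall i, ~ W' i (out i)) ->
  (forall x, (exists i, W i (x i)) -> exists i, W' i (x i)) ->
  forall i z, W i z -> W' i z.
Proof.
move=> out_W' WW' i z Wiz.
pose x j := if j == i then z else out j.
have /WW' [j] : exists j, W j (x j) by exists i; rewrite /x eqxx.
by rewrite /x; case: eqP => [-> //|_ /out_W'].
Qed.

Lemma plectic_witness_uniq (R : realType) (C : fieldType) (abs : C -> R)
    (S : finType) (F : S -> C -> Prop) (G : (S -> 'M[C]_2) -> Prop) L L' :
  (forall s, exists c, ~ F s c) ->
  plectic_witness abs F G L -> plectic_witness abs F G L' -> forall s z, L s z -> L' s z.
Proof.
move=> /functional_choice [c c_F] [_ G_L] [L'F G_L'].
apply: (cylinder_union_sub (out := fun s => Fin (c s))).
  by move=> s /L'F; apply: c_F.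
by move=> x /G_L /G_L'.
Qed.

Theorem lemma2p11 (p : nat) (R : realType) (C : closedFieldType) (abs : C -> R)
  (S : finType) (F : S -> C -> Prop) :
  is_completed_alg_closure abs p ->
  (0 < #|S|)%N ->
  (forall s, is_local_subfield abs (F s)) ->
  forall (G : (S -> 'M[C]_2) -> Prop) (g : S -> 'M[C]_2),
    plectic abs F G -> inPGL F g ->
    plectic abs F (conjG g G) /\
    (forall L L', plectic_witness abs F G L -> plectic_witness abs F (conjG g G) L' ->
       forall x, dist_points L' x <-> exists y, dist_points L y /\ x = actS g y).
Proof.
move=> [_ [abs_na _]] _ F_local G g [G_sub [L G_L]] g_PGL.
have F_subfield s : is_subfield (F s) by case: (F_local s).
have F_proper s : exists c, ~ F s c by apply: local_subfield_proper (F_local s).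
have witness_conjG := plectic_witness_conjG F_subfield g_PGL abs_na G_sub.
have det_g s : \det (g s) != 0 by case: (g_PGL s).
split; first by split; [exact: conjG_subgroup | exists (imageS g L); exact: witness_conjG].
move=> L1 L' G_L1 G_L' x.
have G_gL1 := witness_conjG _ G_L1.
have L'E s z : L' s z <-> imageS g L1 s z.
  split; [exact: (plectic_witness_uniq F_proper G_L' G_gL1) |
          exact: (plectic_witness_uniq F_proper G_gL1 G_L')].
split => [L'x | [y [L1y ->]] s].
  by exists (actS (invS g) x); split; [move=> s; apply/L'E/L'x | rewrite actS_invKV].
by apply/L'E; rewrite /imageS /actS mobiusK.
Qed.
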